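(* Let $J=\{2\}^*\{1\}\{2\}^*\{1\}^*\cup\{2\}^*\subseteq\mathcal{A}_2^*$. Then $(\mathcal{A}_2,J)$ is a biautomatic structure for $\mathrm{rps}_2$.
   Context: Let $\mathcal{A}_2=\{1<2\}$. An rPS tableau is a finite (possibly empty) sequence of nonempty bottom-justified columns of boxes filled with positive integers, such that the entries of each column are weakly decreasing from top to bottom and the bottom entries of the columns form a strictly increasing sequence from left to right. Right insertion of a symbol $a$ into an rPS tableau $B$: if $a$ is strictly greater than every entry of the bottom row, append a new column consisting of $a$ at the right end; otherwise, let $z$ be the leftmost bottom-row entry with $z\geq a$ and put $a$ in a new box at the bottom of the column of $z$ (the previous entries of that column move up one box). For $w=w_1\cdots w_k$, $\mathfrak{R}_r(w)$ is obtained by starting with the empty tableau and right-inserting $w_1,\dots,w_k$ in order. The monoid $\mathrm{rps}_2$ is the quotient of $\mathcal{A}_2^*$ by the congruence $u\equiv v\iff\mathfrak{R}_r(u)=\mathfrak{R}_r(v)$; words are identified with the elements they represent. For an alphabet $\Sigma$ and a padding symbol $\$\notin\Sigma$, $\delta_R:\Sigma^*\times\Sigma^*\to((\Sigma\cup\{\$\})\times(\Sigma\cup\{\$\}))^*$ sends $(u_1\cdots u_m,v_1\cdots v_p)$ to the word of pairs $(u_i,v_i)$ obtained after padding the shorter word on the right with $\$$'s to equal length; $\delta_L$ is the same with padding on the left. For a monoid $M$ generated by finite $\Sigma$ and a regular language $L\subseteq\Sigma^*$ mapping onto $M$, define $L_a=\{(u,v)\in L\times L: ua=_M v\}$ and ${}_aL=\{(u,v)\in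 L\times L: au=_M v\}$. $(\Sigma,L)$ is a biautomatic structure for $M$ if $(L_a)\delta_R$, $({}_aL)\delta_R$, $(L_a)\delta_L$ and $({}_aL)\delta_L$ are regular languages for every $a\in\Sigma\cup\{\varepsilon\}$. *)

From mathcomp Require Import all_boot.
Set Implicit Arguments. Unset Strict Implicit. Unset Printing Implicit Defensive.

(* An rPS tableau is represented as the list of its columns from left to
   right; each column is listed from BOTTOM to TOP (head = bottom entry).
   Entries are positive integers (nat). *)
Definition rps_tableau := seq (seq nat).

Definition is_rPS (t : rps_tableau) : Prop :=
  all (fun c => (c != [::]) && sorted leq c) t /\
  sorted ltn (map (head 0) t).

Fixpoint rins (t : rps_tableau) (a : nat) : rps_tableau :=
  match t with
  | [::] => [:: [:: a]]
  | c :: t' => if a <= head 0 c then (a :: c) :: t' else c :: rins t' a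
  end.

(* The alphabet A_2 = {1 < 2}: the ordinal i : 'I_2 stands for the symbol i+1. *)
Definition A2 := 'I_2.
Definition symval (x : A2) : nat := (nat_of_ord x).+1.
Definition a1 : A2 := @Ordinal 2 0 isT.
Definition a2 : A2 := @Ordinal 2 1 isT.

Definition Rr (w : seq A2) : rps_tableau := foldl rins [::] (map symval w).

Definition rps2_eq (u v : seq A2) : Prop := Rr u = Rr v.

Definition regular (X : finType) (L : seq X -> Prop) : Prop :=
  exists (Q : finType) (q0 : Q) (d : Q -> X -> Q) (F : pred Q),
    forall w, L w <-> F (foldl d q0 w).

(** * Padded convolutions delta_R, delta_L ($ is None) *)
Definition padR (S : Type) (n : nat) (s : seq S) : seq (option S) :=
  map Some s ++ nseq (n - size s) None.
Definition padL (S : Type) (n : nat) (s : seq S) : seq (option S) :=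
  nseq (n - size s) None ++ map Some s.
Definition deltaR (S : Type) (u v : seq S) : seq (option S * option S) :=
  let n := maxn (size u) (size v) in zip (padR n u) (padR n v).
Definition deltaL (S : Type) (u v : seq S) : seq (option S * option S) :=
  let n := maxn (size u) (size v) in zip (padL n u) (padL n v).

Definition conv_image (S : Type) (delta : seq S -> seq S -> seq (option S * option S))
  (R : seq S -> seq S -> Prop) : seq (option S * option S) -> Prop :=
  fun x => exists u v, R u v /\ delta u v = x.

(* word for a in Sigma ∪ {epsilon} (None = epsilon) *)
Definition oword (S : Type) (a : option S) : seq S :=
  if a is Some x then [:: x] else [::].

(** * Biautomatic structure for the monoid M = Sigma^* / eqM.
    Words are identified with the elements they represent; u =_M v is eqM u v. *)
Definition biautomatic_structure (S : finType) (eqM : seq S -> seq S -> Prop)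
  (L : seq S -> Prop) : Prop :=
  [/\ regular L,
      (forall w, exists u, L u /\ eqM u w) &
      forall a : option S,
        let La  := fun u v => L u /\ L v /\ eqM (u ++ oword a) v in
        let aL  := fun u v => L u /\ L v /\ eqM (oword a ++ u) v in
        [/\ regular (conv_image (@deltaR S) La),
            regular (conv_image (@deltaR S) aL),
            regular (conv_image (@deltaL S) La) &
            regular (conv_image (@deltaL S) aL)]].

Definition J (w : seq A2) : Prop :=
  (exists i j k : nat, w = nseq i a2 ++ a1 :: nseq j a2 ++ nseq k a1)
  \/ (exists i : nat, w = nseq i a2).

(* The words of J are normal forms for rps_2.  Right-inserting a letter into
   the tableau of 2^i 1 2^j 1^k (or of 2^i) yields the tableau of another such
   word, so tableaux are computed by a right action of A_2 on normal forms, and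
   distinct normal forms have distinct tableaux.  Hence every relation L_a or
   _aL on J is the graph of an explicit map on normal forms (appending 1 raises
   k, appending 2 raises j, prepending 1 merges the two runs of 2s, ...).  Both
   padded convolutions of such a graph consist of a few runs of letter pairs
   whose lengths are i, j, k, so they are finite unions of languages built from
   single and starred letters. *)

From mathcomp Require Import all_boot zify.
Set Implicit Arguments. Unset Strict Implicit. Unset Printing Implicit Defensive.

Section RegularLanguages.
Variable X : finType.
Implicit Types (L : seq X -> Prop) (w : seq X).

Lemma regular_ext L L' : (forall w, L w <-> L' w) -> regular L -> regular L'.
Proof.
move=> LL' [Q [q0 [d [F HL]]]]; exists Q, q0, d, F => w.
by split=> [/LL'/HL | /HL/LL'].
Qed.

Lemma regular0 : regular (fun _ : seq X => False).
Proof. by exists unit, tt, (fun _ _ => tt), pred0. Qed.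

Lemma regular_nil : regular (fun w => w = [::]).
Proof.
exists bool, true, (fun _ _ => false), id => -[|x w] /=; first by split.
by have -> : foldl (fun _ _ => false) false w = false by elim: w.
Qed.

Lemma regular_letter x : regular (fun w => w = [:: x]).
Proof.
pose d (q : option bool) y :=
  if q is Some false then (if y == x then Some true else None) else None.
exists (option bool), (Some false), d, (pred1 (Some true)) => w.
have dead w' : foldl d None w' = None by elim: w'.
case: w => [|y w] /=; first by split.
rewrite {1}/d; have [->|yx] := eqVneq y x; last first.
  by rewrite dead; split=> // -[] /eqP; rewrite (negPf yx).
by case: w => [|z w]; rewrite /= -/d ?dead; split.
Qed.

Lemma regular_star_letter x : regular (fun w => exists n, w = nseq n x).
Proof.
exists bool, true, (fun b y => b && (y == x)), id => w.
have -> b : foldl (fun b y => b && (y == x)) b w = b && all (pred1 x) w.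
  by elim: w b => [|y w IHw] b /=; rewrite ?andbT // IHw andbA.
split=> [[n ->]|/all_pred1P ->]; [exact: all_pred1_nseq | by exists (size w)].
Qed.

Lemma regular_or L1 L2 : regular L1 -> regular L2 -> regular (fun w => L1 w \/ L2 w).
Proof.
move=> [Q1 [q1 [d1 [F1 H1]]]] [Q2 [q2 [d2 [F2 H2]]]].
pose d (q : Q1 * Q2) x := (d1 q.1 x, d2 q.2 x).
exists (Q1 * Q2)%type, (q1, q2), d, (fun q => F1 q.1 || F2 q.2) => w.
have -> p1 p2 : foldl d (p1, p2) w = (foldl d1 p1 w, foldl d2 p2 w).
  by elim: w p1 p2 => [|x w IHw] //= p1 p2; rewrite IHw.
by split=> [[/H1|/H2] /= -> //|/orP [/H1|/H2]]; [rewrite orbT | left | right].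
Qed.

Lemma regular_cat L1 L2 : regular L1 -> regular L2 ->
  regular (fun w => exists w1 w2, w = w1 ++ w2 /\ L1 w1 /\ L2 w2).
Proof.
move=> [Q1 [q1 [d1 [F1 H1]]]] [Q2 [q2 [d2 [F2 H2]]]].
pose start (q : Q1) : {set Q2} := if F1 q then [set q2] else set0.
pose d (p : Q1 * {set Q2}) x :=
  (d1 p.1 x, [set d2 s x | s in p.2] :|: start (d1 p.1 x)).
exists (Q1 * {set Q2})%type, (q1, start q1), d,
  (fun p : Q1 * {set Q2} => [exists s in p.2, F2 s]) => w.
(* The second component collects the states of the L2-automaton over all
   splittings w = w1 ++ w2 with w1 accepted by the L1-automaton. *)
have run w' : (foldl d (q1, start q1) w').1 = foldl d1 q1 w' /\
  forall s, s \in (foldl d (q1, start q1) w').2 <->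
    exists w1 w2, w' = w1 ++ w2 /\ F1 (foldl d1 q1 w1) /\ foldl d2 q2 w2 = s.
  elim/last_ind: w' => [|v x [run1 run2]].
    split=> // s /=; rewrite /start; split.
      by case: ifP => F; rewrite ?inE // => /eqP ->; exists [::], [::].
    by case=> [[|? ?] [[|? ?] [//= _ [-> <-]]]]; rewrite inE.
  rewrite !foldl_rcons /=; split; first by rewrite run1.
  move=> s; rewrite inE; split.
    case/orP.
      case/imsetP => s' /run2 [w1 [w2 [-> [F <-]]]] ->.
      by exists w1, (rcons w2 x); rewrite rcons_cat foldl_rcons.
    rewrite /start run1; case: ifP => F; rewrite ?inE // => /eqP ->.
    by exists (rcons v x), [::]; rewrite cats0 foldl_rcons.
  case=> w1 [w2 []]; case/lastP: w2 => [|w2 y].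
    rewrite cats0 => <- [F <-]; apply/orP; right.
    by rewrite /start run1 -foldl_rcons F inE.
  rewrite -rcons_cat => /rcons_inj [vE <-] [F <-]; apply/orP; left.
  rewrite foldl_rcons; apply/imsetP; exists (foldl d2 q2 w2) => //.
  by apply/run2; exists w1, w2.
have [_ run2] := run w; split.
  case=> w1 [w2 [wE [/H1 L1w /H2 L2w]]]; apply/existsP; exists (foldl d2 q2 w2).
  by rewrite L2w andbT; apply/run2; exists w1, w2.
case/existsP => s /andP [/run2 [w1 [w2 [-> [F <-]]]] Fs].
by exists w1, w2; split=> //; split; [apply/H1 | apply/H2].
Qed.

Inductive atom := Lit of X | Star of X.

Fixpoint matches (p : seq atom) w : Prop :=
  match p with
  | [::] => w = [::]
  | Lit x :: p' => exists w', w = x :: w' /\ matches p' w'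
  | Star x :: p' => exists n w', w = nseq n x ++ w' /\ matches p' w'
  end.

Fixpoint matches_some (ps : seq (seq atom)) w : Prop :=
  if ps is p :: ps' then matches p w \/ matches_some ps' w else False.

Lemma regular_matches p : regular (matches p).
Proof.
elim: p => [|[] x p IHp] /=; first exact: regular_nil.
  apply: regular_ext (regular_cat (regular_letter x) IHp) => w.
  split=> [[_ [w' [-> [-> ?]]]]|[w' [-> ?]]]; first by exists w'.
  by exists [:: x], w'.
apply: regular_ext (regular_cat (regular_star_letter x) IHp) => w.
split=> [[_ [w' [-> [[n ->] ?]]]]|[n [w' [-> ?]]]]; first by exists n, w'.
by exists (nseq n x), w'; do ![split=> //]; exists n.
Qed.

Lemma regular_matches_some ps : regular (matches_some ps).
Proof.
elim: ps => [|p ps IHps] /=; first exact: regular0.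
exact: regular_or (regular_matches p) IHps.
Qed.
End RegularLanguages.

Arguments Lit {X}.
Arguments Star {X}.

Inductive jnormal := Twos of nat | Mixed of nat & nat & nat.

Definition jword (n : jnormal) : seq A2 :=
  match n with
  | Twos i => nseq i a2
  | Mixed i j k => nseq i a2 ++ a1 :: nseq j a2 ++ nseq k a1
  end.

Definition jtab (n : jnormal) : rps_tableau :=
  match n with
  | Twos i => if i is 0 then [::] else [:: nseq i 2]
  | Mixed i j k => (nseq k.+1 1 ++ nseq i 2) :: (if j is 0 then [::] else [:: nseq j 2])
  end.

Definition rmul (n : jnormal) (x : A2) : jnormal :=
  match n, symval x with
  | Twos i, 1 => Mixed i 0 0
  | Twos i, _ => Twos i.+1
  | Mixed i j k, 1 => Mixed i j k.+1
  | Mixed i j k, _ => Mixed i j.+1 k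
  end.

Definition lmul (x : A2) (n : jnormal) : jnormal :=
  match n, symval x with
  | Twos i, 1 => Mixed 0 i 0
  | Twos i, _ => Twos i.+1
  | Mixed i j k, 1 => Mixed 0 (i + j) k.+1
  | Mixed i j k, _ => Mixed i.+1 j k
  end.

Definition jeval (w : seq A2) : jnormal := foldl rmul (Twos 0) w.

Lemma a1_or_a2 (x : A2) : x = a1 \/ x = a2.
Proof. by case: x => -[|[|//]] ?; [left | right]; apply: val_inj. Qed.

Lemma rins_jtab n x : rins (jtab n) (symval x) = jtab (rmul n x).
Proof. by case: (a1_or_a2 x) => ->; case: n => [[|i]|i [|j] k]. Qed.

Lemma Rr_jeval w : Rr w = jtab (jeval w).
Proof.
rewrite /Rr /jeval -[[::]]/(jtab (Twos 0)).
by elim: w (Twos 0) => //= x w IHw n; rewrite rins_jtab.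
Qed.

Definition jtab_inv (t : rps_tableau) : jnormal :=
  match t with
  | [::] => Twos 0
  | [:: c] =>
    if head 0 c == 1 then Mixed (count_mem 2 c) 0 (count_mem 1 c).-1 else Twos (size c)
  | c :: c' :: _ => Mixed (count_mem 2 c) (size c') (count_mem 1 c).-1
  end.

Lemma jtabK : cancel jtab jtab_inv.
Proof.
case=> [[|i]|i [|j] k] //=; rewrite ?size_nseq // !count_cat !count_nseq /=.
all: by rewrite !mul1n !mul0n !add0n addn0.
Qed.

Lemma jtab_inj : injective jtab.
Proof. exact: can_inj jtabK. Qed.

Lemma rps2_eqE u v : rps2_eq u v <-> jeval u = jeval v.
Proof. by rewrite /rps2_eq !Rr_jeval; split=> [/jtab_inj|->]. Qed.

Lemma foldl_rmul_Twos i n : foldl rmul (Twos i) (nseq n a2) = Twos (i + n).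
Proof. by elim: n i => [|n IHn] i /=; rewrite ?addn0 ?IHn ?addnS. Qed.

Lemma foldl_rmul_Mixed i j k w :
  foldl rmul (Mixed i j k) w = Mixed i (j + count_mem a2 w) (k + count_mem a1 w).
Proof.
elim: w j k => [|x w IHw] j k /=; first by rewrite !addn0.
by case: (a1_or_a2 x) => -> /=; rewrite IHw ?addnS ?addn0.
Qed.

Lemma jeval_jword n : jeval (jword n) = n.
Proof.
case: n => [i|i j k]; rewrite /jeval /= ?foldl_cat foldl_rmul_Twos //=.
by rewrite foldl_rmul_Mixed !count_cat !count_nseq /= !mul0n !mul1n addn0.
Qed.

Lemma J_jword w : J w <-> exists n, w = jword n.
Proof.
split=> [[[i [j [k ->]]]|[i ->]]|[[i|i j k] ->]].
- by exists (Mixed i j k).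
- by exists (Twos i).
- by right; exists i.
- by left; exists i, j, k.
Qed.

Lemma jeval_rmul n x : jeval (jword n ++ [:: x]) = rmul n x.
Proof. by rewrite /jeval foldl_cat -/(jeval _) jeval_jword. Qed.

Lemma jeval_lmul x n : jeval (x :: jword n) = lmul x n.
Proof.
case: (a1_or_a2 x) => ->; last first.
  case: n => [i|i j k]; first exact: (jeval_jword (Twos i.+1)).
  exact: (jeval_jword (Mixed i.+1 j k)).
rewrite /jeval /= foldl_rmul_Mixed.
case: n => [i|i j k] /=; rewrite ?count_cat ?count_nseq /= ?count_cat ?count_nseq /=.
all: by congr Mixed; lia.
Qed.

Definition conv_graph (delta : seq A2 -> seq A2 -> seq (option A2 * option A2))
    (op : jnormal -> jnormal) w :=
  exists n, w = delta (jword n) (jword (op n)).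

Section Graph.
Variables (f : seq A2 -> seq A2) (op : jnormal -> jnormal).
Hypothesis jeval_f : forall n, jeval (f (jword n)) = op n.

Lemma J_rel_graph u v :
  J u /\ J v /\ rps2_eq (f u) v <-> exists n, u = jword n /\ v = jword (op n).
Proof.
split=> [[/J_jword [n ->] [/J_jword [m ->]]] | [n [-> ->]]].
  by move/rps2_eqE; rewrite jeval_f jeval_jword => <-; exists n.
split; first by apply/J_jword; exists n.
split; first by apply/J_jword; exists (op n).
by apply/rps2_eqE; rewrite jeval_f jeval_jword.
Qed.

Lemma conv_image_J_rel delta w :
  conv_image delta (fun u v => J u /\ J v /\ rps2_eq (f u) v) w <-> conv_graph delta op w.
Proof.
split=> [[u [v [/J_rel_graph [n [-> ->]] <-]]] | [n ->]]; first by exists n.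
by exists (jword n), (jword (op n)); split=> //; apply/J_rel_graph; exists n.
Qed.

Lemma regular_conv_J_rel delta : regular (conv_graph delta op) ->
  regular (conv_image delta (fun u v => J u /\ J v /\ rps2_eq (f u) v)).
Proof. by apply: regular_ext => w; split=> /conv_image_J_rel. Qed.
End Graph.

Section Convolution.
Variable S : Type.
Implicit Types (u v : seq S).

Lemma deltaR_diag u : deltaR u u = [seq (Some x, Some x) | x <- u].
Proof. by rewrite /deltaR /padR maxnn subnn cats0; elim: u => //= x u ->. Qed.

Lemma deltaL_diag u : deltaL u u = [seq (Some x, Some x) | x <- u].
Proof. by rewrite /deltaL /padL maxnn subnn; elim: u => //= x u ->. Qed.

Lemma deltaR_sizeS u v : size v = (size u).+1 ->
  deltaR u v = zip (map Some u ++ [:: None]) (map Some v).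
Proof.
by move=> sv; rewrite /deltaR /padR sv (maxn_idPr (leqnSn _)) subnn subSnn cats0.
Qed.

Lemma deltaL_sizeS u v : size v = (size u).+1 ->
  deltaL u v = zip (None :: map Some u) (map Some v).
Proof. by move=> sv; rewrite /deltaL /padL sv (maxn_idPr (leqnSn _)) subnn subSnn. Qed.

Lemma zip_nseq_cat T n (x : S) (y : T) s t :
  zip (nseq n x ++ s) (nseq n y ++ t) = nseq n (x, y) ++ zip s t.
Proof. by elim: n => //= n ->. Qed.

Lemma zip_cons_nseq_cat T n (x : S) (y : T) s t :
  zip (x :: nseq n x ++ s) (nseq n y ++ t) = nseq n (x, y) ++ zip (x :: s) t.
Proof. by elim: n => //= n ->. Qed.

Lemma zip_nseq_cons_cat T n (x : S) (y : T) s t :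
  zip (nseq n x ++ s) (y :: nseq n y ++ t) = nseq n (x, y) ++ zip s (y :: t).
Proof. by elim: n => //= n ->. Qed.

Lemma cons_nseq_catS n (x : S) s : x :: nseq n x ++ s = nseq n.+1 x ++ s.
Proof. by []. Qed.
End Convolution.

Lemma size_jword_rmul n x : size (jword (rmul n x)) = (size (jword n)).+1.
Proof.
case: (a1_or_a2 x) => ->; case: n => * /=.
all: by do 2 rewrite ?size_cat /=; rewrite ?size_nseq; lia.
Qed.

Lemma size_jword_lmul x n : size (jword (lmul x n)) = (size (jword n)).+1.
Proof.
case: (a1_or_a2 x) => ->; case: n => * /=.
all: by do 2 rewrite ?size_cat /=; rewrite ?size_nseq; lia.
Qed.

(* Letters of the convolution alphabet; the digit 0 stands for the padding $. *)
Notation z11 := (Some a1, Some a1).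
Notation z12 := (Some a1, Some a2).
Notation z21 := (Some a2, Some a1).
Notation z22 := (Some a2, Some a2).
Notation z01 := (@None A2, Some a1).
Notation z02 := (@None A2, Some a2).

Arguments zip : simpl nomatch.

(* Rewrites the convolution of two normal forms into runs [nseq n (x, y)].
   Appending [::] to both rows makes every run the head of a concatenation, as
   the zip lemmas require; runs are finally folded so that stars can match. *)
Ltac conv_blocks :=
  try (first [ rewrite deltaR_sizeS | rewrite deltaL_sizeS ];
       [| by first [exact: size_jword_rmul | exact: size_jword_lmul]];
       match goal with |- context [zip ?s ?t] => rewrite -(cats0 s) -(cats0 t) end);
  repeat progress rewrite /= -?catA ?map_cat ?map_nseq ?nseqD
    ?zip_nseq_cat ?zip_cons_nseq_cat ?zip_nseq_cons_cat;
  rewrite ?cats0 ?cons_nseq_catS.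

Ltac match_step := first
  [ eexists; split; [reflexivity|]
  | eexists; eexists; split; [reflexivity|]
  | eexists; exists [::]; split; [by rewrite cats0|]
  | exists 0; eexists; split; [reflexivity|] ].
Ltac matches_some_solve :=
  cbn [matches_some matches];
  repeat (first [left; repeat match_step; reflexivity | right]).

Ltac matches_destruct := repeat match goal with
  | H : _ \/ _ |- _ => destruct H as [H|H]
  | H : False |- _ => destruct H
  | H : @ex nat _ |- _ => let n := fresh "n" in destruct H as [n H]
  | H : exists _, _ |- _ => let w := fresh "w" in destruct H as [w H]
  | H : _ /\ _ |- _ => let E := fresh "E" in destruct H as [E H]
  end; subst.

Lemma regular_J : regular J.
Proof.
apply: (regular_ext _ (regular_matches_some
  [:: [:: Star a2; Lit a1; Star a2; Star a1]; [:: Star a2]])) => w.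
split=> [H | /J_jword [[i|i j k] ->]]; try by matches_some_solve.
simpl in H; matches_destruct; rewrite cats0.
  by left; exists n, n0, n1.
by right; exists n.
Qed.

Lemma regular_delta_id delta :
  (forall u : seq A2, delta u u = [seq (Some x, Some x) | x <- u]) ->
  regular (conv_graph delta id).
Proof.
move=> delta_diag; apply: (regular_ext _ (regular_matches_some
  [:: [:: Star z22; Lit z11; Star z22; Star z11]; [:: Star z22]])) => w.
split=> [H | [n ->]]; last first.
  by rewrite /id delta_diag; case: n => *; conv_blocks; matches_some_solve.
simpl in H; matches_destruct; [exists (Mixed n n0 n1) | exists (Twos n)].
all: by rewrite /id delta_diag; conv_blocks.
Qed.

Lemma regular_deltaR_rmul x : regular (conv_graph (@deltaR A2) (rmul^~ x)).
Proof.
case: (a1_or_a2 x) => ->.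
  apply: (regular_ext _ (regular_matches_some [::
    [:: Star z22; Lit z11; Star z22; Star z11; Lit z01];
    [:: Star z22; Lit z01]])) => w.
  split=> [H | [[i|i j k] ->]]; last by conv_blocks; matches_some_solve.
    simpl in H; matches_destruct.
    + by exists (Mixed n n0 n1); conv_blocks.
    + by exists (Twos n); conv_blocks.
  by conv_blocks; matches_some_solve.
apply: (regular_ext _ (regular_matches_some [::
  [:: Star z22; Lit z11; Star z22; Lit z02];
  [:: Star z22; Lit z11; Star z22; Lit z12; Star z11; Lit z01];
  [:: Star z22; Lit z02]])) => w.
split=> [H | [[i|i j [|k]] ->]]; try by conv_blocks; matches_some_solve.
simpl in H; matches_destruct.
  + by exists (Mixed n n0 0); conv_blocks.
- by exists (Mixed n n0 n1.+1); conv_blocks.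
- by exists (Twos n); conv_blocks.
Qed.

Lemma regular_deltaL_rmul x : regular (conv_graph (@deltaL A2) (rmul^~ x)).
Proof.
case: (a1_or_a2 x) => ->.
  apply: (regular_ext _ (regular_matches_some [::
    [:: Lit z01; Lit z11; Star z11];
    [:: Lit z01; Lit z12; Star z22; Lit z21; Star z11];
    [:: Lit z02; Star z22; Lit z21; Lit z11; Star z11];
    [:: Lit z02; Star z22; Lit z21; Lit z12; Star z22; Lit z21; Star z11];
    [:: Lit z01];
    [:: Lit z02; Star z22; Lit z21]])) => w.
  split=> [H | [[[|i]|[|i] [|j] k] ->]]; try by conv_blocks; matches_some_solve.
  simpl in H; matches_destruct.
  + by exists (Mixed 0 0 n); conv_blocks.
  + by exists (Mixed 0 n.+1 n0); conv_blocks.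
  + by exists (Mixed n.+1 0 n0); conv_blocks.
  + by exists (Mixed n.+1 n0.+1 n1); conv_blocks.
  + by exists (Twos 0); conv_blocks.
  + by exists (Twos n.+1); conv_blocks.
apply: (regular_ext _ (regular_matches_some [::
  [:: Lit z01; Lit z12; Star z22; Star z11];
  [:: Lit z02; Star z22; Lit z21; Lit z12; Star z22; Star z11];
  [:: Lit z02; Star z22]])) => w.
split=> [H | [[i|[|i] j k] ->]]; try by conv_blocks; matches_some_solve.
simpl in H; matches_destruct.
- by exists (Mixed 0 n n0); conv_blocks.
- by exists (Mixed n.+1 n0 n1); conv_blocks.
- by exists (Twos n); conv_blocks.
Qed.

Lemma regular_deltaR_lmul x : regular (conv_graph (@deltaR A2) (lmul x)).
Proof.
case: (a1_or_a2 x) => ->.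
  apply: (regular_ext _ (regular_matches_some [::
    [:: Lit z11; Star z22; Star z11; Lit z01];
    [:: Lit z21; Star z22; Lit z12; Star z22; Star z11; Lit z01];
    [:: Lit z01];
    [:: Lit z21; Star z22; Lit z02]])) => w.
  split=> [H | [[[|i]|[|i] j k] ->]]; try by conv_blocks; matches_some_solve.
  simpl in H; matches_destruct.
  + by exists (Mixed 0 n n0); conv_blocks.
  + by exists (Mixed n.+1 n0 n1); conv_blocks.
  + by exists (Twos 0); conv_blocks.
  + by exists (Twos n.+1); conv_blocks.
apply: (regular_ext _ (regular_matches_some [::
  [:: Star z22; Lit z12; Star z11; Lit z01];
  [:: Star z22; Lit z12; Lit z21; Star z22; Lit z02];
  [:: Star z22; Lit z12; Lit z21; Star z22; Lit z12; Star z11; Lit z01];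
  [:: Star z22; Lit z02]])) => w.
split=> [H | [[i|i [|j] [|k]] ->]]; try by conv_blocks; matches_some_solve.
simpl in H; matches_destruct.
- by exists (Mixed n 0 n0); conv_blocks.
- by exists (Mixed n n0.+1 0); conv_blocks.
- by exists (Mixed n n0.+1 n1.+1); conv_blocks.
- by exists (Twos n); conv_blocks.
Qed.

Lemma regular_deltaL_lmul x : regular (conv_graph (@deltaL A2) (lmul x)).
Proof.
case: (a1_or_a2 x) => ->.
  apply: (regular_ext _ (regular_matches_some [::
    [:: Lit z01; Star z22; Lit z11; Star z11];
    [:: Lit z01; Star z22; Lit z12; Star z22; Lit z21; Star z11];
    [:: Lit z01; Star z22]])) => w.
  split=> [H | [[i|i [|j] k] ->]]; try by conv_blocks; matches_some_solve.
  simpl in H; matches_destruct.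
  + by exists (Mixed n 0 n0); conv_blocks.
  + by exists (Mixed n n0.+1 n1); conv_blocks.
  + by exists (Twos n); conv_blocks.
apply: (regular_ext _ (regular_matches_some [::
  [:: Lit z02; Star z22; Lit z11; Star z22; Star z11];
  [:: Lit z02; Star z22]])) => w.
split=> [H | [[i|i j k] ->]]; try by conv_blocks; matches_some_solve.
simpl in H; matches_destruct.
- by exists (Mixed n n0 n1); conv_blocks.
- by exists (Twos n); conv_blocks.
Qed.

Theorem proposition6p5 : biautomatic_structure rps2_eq J.
Proof.
split; first exact: regular_J.
  move=> w; exists (jword (jeval w)); split; first by apply/J_jword; eexists.
  by apply/rps2_eqE; rewrite jeval_jword.
case=> [x|] /=.
  split.
  - exact: (regular_conv_J_rel (jeval_rmul^~ x) (regular_deltaR_rmul x)).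
  - exact: (regular_conv_J_rel (f := cons x) (jeval_lmul x) (regular_deltaR_lmul x)).
  - exact: (regular_conv_J_rel (jeval_rmul^~ x) (regular_deltaL_rmul x)).
  - exact: (regular_conv_J_rel (f := cons x) (jeval_lmul x) (regular_deltaL_lmul x)).
have jeval_cats0 n : jeval (jword n ++ [::]) = n by rewrite cats0 jeval_jword.
split.
- exact: (regular_conv_J_rel jeval_cats0 (regular_delta_id (@deltaR_diag _))).
- exact: (regular_conv_J_rel (f := id) jeval_jword (regular_delta_id (@deltaR_diag _))).
- exact: (regular_conv_J_rel jeval_cats0 (regular_delta_id (@deltaL_diag _))).
- exact: (regular_conv_J_rel (f := id) jeval_jword (regular_delta_id (@deltaL_diag _))).
Qed.
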